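(* Let $M, K \ge 1$ be integers, let $(\mathcal{U}, (\cdot,\cdot)_{\mathcal{U}})$ be a real Hilbert space with norm $\|\cdot\|_{\mathcal{U}}$, and let $\mathcal{P} \subset \mathbb{R}^{p}$ be a compact set of hyper-parameters. For every $\theta \in \mathcal{P}$ let $a_\theta : \mathcal{U}\times\mathcal{U} \to \mathbb{R}$ be a bounded, coercive bilinear form and $b_\theta : \mathbb{R}^M \times \mathcal{U} \to \mathbb{R}$ a non-trivial (not identically zero) bounded bilinear form, and for $m \in \mathbb{R}^M$ let $u_\theta(m) \in \mathcal{U}$ be the unique solution of $a_\theta(u_\theta(m), \psi) = b_\theta(m,\psi)$ for all $\psi \in \mathcal{U}$. Let $\Sigma_0 \in \mathbb{R}^{M\times M}$ be symmetric positive definite, with $\|m\|_{\Sigma_0^{-1}}^2 := m^T \Sigma_0^{-1} m$, and let $C_{\Sigma_0^{-1}} := \sup_{m \ne 0} \|m\|_2/\|m\|_{\Sigma_0^{-1}}$, where $\|\cdot\|_2$ is the Euclidean norm. Let $L = (l_1,\dots,l_K)^T : \mathcal{U} \to \mathbb{R}^K$ with each $l_k$ a bounded linear functional on $\mathcal{U}$, let $\Sigma_L \in \mathbb{R}^{K\times K}$ be symmetric positive definite with $\|d\|_{\Sigma_L^{-1}}^2 := d^T\Sigma_L^{-1} d$, and let $\sigma > 0$. Fix $\theta \in \mathcal{P}$. Let $G_{\theta,L} \in \mathbb{R}^{K \times M}$ be the matrix of the linear map $m \mapsto L u_\theta(m)$, and define the posterior covariance $$\Sigma_{\mathrm{post}}^{\theta,L}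 := \Big(\tfrac{1}{\sigma^2} G_{\theta,L}^T \Sigma_L^{-1} G_{\theta,L} + \Sigma_0^{-1}\Big)^{-1}.$$ Let $X_\theta := \{m \in \mathbb{R}^M : u_\theta(m) = 0\}$, let $X_\theta^\perp$ be its orthogonal complement in the Euclidean inner product, and let $\Pi$ be the Euclidean orthogonal projection onto $X_\theta^\perp$. Define $$\eta_{\inf} := \inf_{0\neq m \in X_\theta^\perp} \frac{\|u_\theta(m)\|_{\mathcal{U}}}{\|m\|_{\Sigma_0^{-1}}}, \qquad \beta_{\theta,L} := \inf\{\|L u_\theta(m)\|_{\Sigma_L^{-1}} : m \in \mathbb{R}^M,\ \|u_\theta(m)\|_{\mathcal{U}} = 1\}.$$ Let $0 < \lambda_1 \le \dots \le \lambda_M$ be the eigenvalues of $\Sigma_{\mathrm{post}}^{\theta,L}$ (with multiplicity) and $(m_{\lambda_i})_{i=1}^M$ a Euclidean-orthonormal basis of $\mathbb{R}^M$ with $\Sigma_{\mathrm{post}}^{\theta,L} m_{\lambda_i} = \lambda_i m_{\lambda_i}$. Then for each $i = 1,\dots,M$, $$\lambda_i \le \frac{C_{\Sigma_0^{-1}}^2}{\frac{1}{\sigma^2}\beta_{\theta,L}^2\, \eta_{\inf}^2\, \|\Pi m_{\lambda_i}\|_2^2 + 1},$$ and consequently $$\operatorname{trace}(\Sigma_{\mathrm{post}}^{\theta,L}) \le C_{\Sigma_0^{-1}}^2 \sum_{i=1}^M \Big(\tfrac{1}{\sigma^2}\beta_{\theta,L}^2\, \eta_{\inf}^2\, \|\Pi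 m_{\lambda_i}\|_2^2 + 1\Big)^{-1}.$$
   Context: This is the setting of a hyper-parameterized linear Bayesian inverse problem: prior $\mathcal{N}(m_0,\Sigma_0)$ on the parameter $m\in\mathbb{R}^M$, data $d = L u_\theta(m) + \eta$ with noise $\eta \sim \mathcal{N}(0,\sigma^2\Sigma_L)$; $\Sigma_{\mathrm{post}}^{\theta,L}$ is the covariance of the resulting Gaussian posterior. $\beta_{\theta,L}$ is called the observability coefficient. Since $b_\theta$ is non-trivial, $X_\theta^\perp \ne \{0\}$ and $\eta_{\inf} > 0$. *)

From HB Require Import structures.
From mathcomp Require Import all_boot all_order all_algebra.
From mathcomp Require Import all_classical all_reals all_analysis.
Set Implicit Arguments. Unset Strict Implicit. Unset Printing Implicit Defensive.
Import Order.TTheory GRing.Theory Num.Theory.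
Import numFieldNormedType.Exports.
Local Open Scope ring_scope.
Local Open Scope classical_set_scope.

Section Defs.
Variable R : realType.

Definition edot n (x y : 'cV[R]_n) : R := (x^T *m y) 0 0.
Definition enorm n (x : 'cV[R]_n) : R := Num.sqrt (edot x x).

Definition wnorm n (S : 'M[R]_n) (x : 'cV[R]_n) : R :=
  Num.sqrt ((x^T *m invmx S *m x) 0 0).

Definition sym_posdef n (S : 'M[R]_n) : Prop :=
  S^T = S /\ forall x : 'cV[R]_n, x != 0 -> 0 < (x^T *m S *m x) 0 0.

Definition inner_product_of_norm (U : normedModType R) (ip : U -> U -> R) : Prop :=
  (forall x y, ip x y = ip y x) /\
  (forall x y z, ip (x + y) z = ip x z + ip y z) /\
  (forall (c : R) x y, ip (c *: x) y = c * ip x y) /\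
  (forall x, ip x x = `|x| ^+ 2).

Definition bilinear_form (V W : lmodType R) (f : V -> W -> R) : Prop :=
  (forall x1 x2 y, f (x1 + x2) y = f x1 y + f x2 y) /\
  (forall (c : R) x y, f (c *: x) y = c * f x y) /\
  (forall x y1 y2, f x (y1 + y2) = f x y1 + f x y2) /\
  (forall (c : R) x y, f x (c *: y) = c * f x y).

Definition bounded_bilinear_U (U : normedModType R) (a : U -> U -> R) : Prop :=
  bilinear_form a /\ exists C : R, 0 < C /\ forall x y, `|a x y| <= C * `|x| * `|y|.

Definition coercive (U : normedModType R) (a : U -> U -> R) : Prop :=
  exists alpha : R, 0 < alpha /\ forall x, alpha * `|x| ^+ 2 <= a x x.

Definition bounded_bilinear_MU M (U : normedModType R) (b : 'cV[R]_M -> U -> R) : Prop :=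
  bilinear_form b /\ exists C : R, 0 < C /\ forall m y, `|b m y| <= C * enorm m * `|y|.

Definition nontrivial_form M (U : Type) (b : 'cV[R]_M -> U -> R) : Prop :=
  exists m y, b m y != 0.

Definition bounded_linear_obs K (U : normedModType R) (L : U -> 'cV[R]_K) : Prop :=
  (forall x y, L (x + y) = L x + L y) /\
  (forall (c : R) x, L (c *: x) = c *: L x) /\
  (forall k : 'I_K, exists C : R, 0 < C /\ forall x, `|L x k 0| <= C * `|x|).

Definition C_Sigma M (S0 : 'M[R]_M) : R :=
  sup [set enorm m / wnorm S0 m | m in [set m : 'cV[R]_M | m != 0]].

Definition Gmat K M (U : Type) (L : U -> 'cV[R]_K) (u : 'cV[R]_M -> U) : 'M[R]_(K, M) :=
  \matrix_(k < K, j < M) (L (u (delta_mx j 0))) k 0.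

Definition Sigma_post K M (G : 'M[R]_(K, M)) (SL : 'M[R]_K) (S0 : 'M[R]_M) (sigma : R)
  : 'M[R]_M :=
  invmx ((sigma ^+ 2)^-1 *: (G^T *m invmx SL *m G) + invmx S0).

Definition Xker M (U : zmodType) (u : 'cV[R]_M -> U) : set 'cV[R]_M :=
  [set m | u m = 0].
Definition orth_compl M (X : set 'cV[R]_M) : set 'cV[R]_M :=
  [set y | forall x, X x -> edot y x = 0].

Definition is_orth_proj M (Y : set 'cV[R]_M) (Pi : 'cV[R]_M -> 'cV[R]_M) : Prop :=
  forall m, Y (Pi m) /\ forall y, Y y -> edot (m - Pi m) y = 0.

Definition eta_inf M (U : normedModType R) (S0 : 'M[R]_M) (u : 'cV[R]_M -> U) : R :=
  inf [set `|u m| / wnorm S0 m |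
        m in [set m | orth_compl (Xker u) m /\ m != 0]].

Definition beta_obs K M (U : normedModType R) (L : U -> 'cV[R]_K) (SL : 'M[R]_K)
  (u : 'cV[R]_M -> U) : R :=
  inf [set wnorm SL (L (u m)) | m in [set m : 'cV[R]_M | `|u m| = 1]].

End Defs.

From HB Require Import structures.
From mathcomp Require Import all_boot all_order all_algebra.
From mathcomp Require Import all_classical all_reals all_analysis.
From mathcomp Require Import lra.
Set Implicit Arguments. Unset Strict Implicit. Unset Printing Implicit Defensive.
Import Order.TTheory GRing.Theory Num.Theory.
Import numFieldNormedType.Exports.
Local Open Scope ring_scope.
Local Open Scope classical_set_scope.

(* An eigenvalue lam of Sigma_post with unit eigenvector v is the inverse of the
   Rayleigh quotient v^T A v of the posterior precision
   A = sigma^-2 G^T SL^-1 G + S0^-1, and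
   v^T A v = sigma^-2 |L u(v)|^2_{SL^-1} + |v|^2_{S0^-1}.
   Since |m|_2 <= C |m|_{S0^-1}, the prior term is at least C^-2.  For the data
   term, u(v) = u(Pi v), because the Gram vector of u shows that the double
   orthogonal complement of X = ker u lies in X; hence
   |L u(v)|_{SL^-1} >= beta |u(Pi v)| >= beta eta |Pi v|_{S0^-1} >= beta eta |Pi v|_2 / C.
   The trace bound follows by summing over the orthonormal eigenbasis. *)

Section EuclideanDot.
Variables (R : realType) (n : nat).
Implicit Types x y : 'cV[R]_n.

Lemma edotE x y : edot x y = \sum_i x i 0 * y i 0.
Proof. by rewrite /edot !mxE; apply: eq_bigr => i _; rewrite mxE. Qed.

Lemma edotC x y : edot x y = edot y x.
Proof. by rewrite !edotE; apply: eq_bigr => i _; rewrite mulrC. Qed.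

Lemma edot_ge0 x : 0 <= edot x x.
Proof. by rewrite edotE sumr_ge0 // => i _; rewrite -expr2 sqr_ge0. Qed.

Lemma edot_eq0 x : (edot x x == 0) = (x == 0).
Proof.
apply/eqP/eqP => [|->]; last by rewrite /edot mulmx0 mxE.
rewrite edotE => /eqP; rewrite psumr_eq0 => [/allP x0|i _]; last first.
  by rewrite -expr2 sqr_ge0.
apply/matrixP => i j; rewrite (ord1 j) mxE.
by have := x0 i (mem_index_enum _); rewrite mulf_eq0 orbb => /eqP.
Qed.

Lemma enorm_sqr x : enorm x ^+ 2 = edot x x.
Proof. by rewrite sqr_sqrtr // edot_ge0. Qed.

Lemma sqr_coord_le_edot x i : x i 0 ^+ 2 <= edot x x.
Proof.
rewrite edotE (bigD1 i) //= -expr2 lerDl sumr_ge0 // => j _.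
by rewrite -expr2 sqr_ge0.
Qed.

Lemma additive_scalable_sum (V : lmodType R) (f : 'cV[R]_n -> V) :
    (forall x y, f (x + y) = f x + f y) -> (forall (c : R) x, f (c *: x) = c *: f x) ->
  forall x, f x = \sum_j x j 0 *: f (delta_mx j 0).
Proof.
move=> fD fZ x; have f0 : f 0 = 0 by rewrite -(scale0r 0) fZ scale0r.
rewrite {1}(matrix_sum_delta x) (big_morph f fD f0); apply: eq_bigr => j _.
by rewrite big_ord1 fZ.
Qed.

Lemma mxtrace_orthonormal_eigenbasis (S : 'M[R]_n) (lam : 'I_n -> R)
    (v : 'I_n -> 'cV[R]_n) :
    (forall i j, edot (v i) (v j) = (i == j)%:R) ->
    (forall i, S *m v i = lam i *: v i) ->
  \tr S = \sum_i lam i.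
Proof.
move=> v_orth v_eig; set V : 'M[R]_n := \matrix_(k, j) v j k 0.
have VtV : V^T *m V = 1%:M.
  apply/matrixP => i j; rewrite !mxE -v_orth edotE.
  by apply: eq_bigr => k _; rewrite !mxE.
rewrite -[S]mulmx1 -(mulmx1C VtV) mulmxA mxtrace_mulC mulmxA.
apply: eq_bigr => i _.
have colV j : col j V = v j by apply/matrixP => k l; rewrite (ord1 l) !mxE.
have SVi : col i (S *m V) = lam i *: v i by rewrite colE -mulmxA -colE colV v_eig.
have -> : (V^T *m S *m V) i i = edot (v i) (lam i *: v i).
  rewrite -SVi -mulmxA mxE edotE.
  by apply: eq_bigr => k _; rewrite !mxE.
by rewrite /edot -scalemxAr mxE -/(edot _ _) v_orth eqxx mulr1.
Qed.
End EuclideanDot.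

Section QuadraticForm.
Variables (R : realType) (n : nat).
Implicit Types (S : 'M[R]_n) (x y : 'cV[R]_n).

Definition qform S x y : R := (x^T *m S *m y) 0 0.

Lemma qformDl S x1 x2 y : qform S (x1 + x2) y = qform S x1 y + qform S x2 y.
Proof. by rewrite /qform linearD /= !mulmxDl mxE. Qed.

Lemma qformZl S (c : R) x y : qform S (c *: x) y = c * qform S x y.
Proof. by rewrite /qform linearZ /= -!scalemxAl mxE. Qed.

Lemma qformDr S x y1 y2 : qform S x (y1 + y2) = qform S x y1 + qform S x y2.
Proof. by rewrite /qform mulmxDr mxE. Qed.

Lemma qformZr S (c : R) x y : qform S x (c *: y) = c * qform S x y.
Proof. by rewrite /qform -scalemxAr mxE. Qed.

Lemma qformC S x y : S^T = S -> qform S x y = qform S y x.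
Proof.
move=> ST; have -> : qform S y x = ((y^T *m S *m x)^T) 0 0 by rewrite mxE.
by rewrite /qform !trmx_mul trmxK ST mulmxA.
Qed.

Lemma qform_ge0 S x : sym_posdef S -> 0 <= qform S x x.
Proof.
move=> [_ S_pos]; have [->|x0] := eqVneq x 0; last exact/ltW/S_pos.
by rewrite /qform mulmx0 mxE.
Qed.

Lemma sym_posdef_unit S : sym_posdef S -> S \in unitmx.
Proof.
move=> [_ S_pos]; rewrite unitmxE unitfE; apply/negP => /det0P [w w0 wS].
have wT0 : w^T != 0 by apply: contra w0 => /eqP wT0; rewrite -(trmxK w) wT0 linear0.
by have := S_pos _ wT0; rewrite trmxK wS mul0mx mxE ltxx.
Qed.

Lemma sym_posdef_inv S : sym_posdef S -> sym_posdef (invmx S).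
Proof.
move=> S_spd; have S_unit := sym_posdef_unit S_spd; case: S_spd => ST S_pos.
split=> [|x x0]; first by rewrite trmx_inv ST.
have y0 : invmx S *m x != 0.
  by apply: contra x0 => /eqP y0; rewrite -(mulKVmx S_unit x) y0 mulmx0.
have := S_pos _ y0; congr (_ < _).
by rewrite trmx_mul trmx_inv ST -!mulmxA mulKVmx.
Qed.

Lemma qform_cauchy_schwarz S x y : sym_posdef S ->
  qform S x y ^+ 2 <= qform S x x * qform S y y.
Proof.
move=> S_spd; have [->|y0] := eqVneq y 0.
  by rewrite /qform !mulmx0 mxE expr0n mulr0.
have y_pos : 0 < qform S y y by case: S_spd => _; apply.
have := qform_ge0 (qform S y y *: x - qform S x y *: y) S_spd.
rewrite !(qformDl, qformDr, qformZl, qformZr) -!scaleNr !(qformZl, qformZr).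
rewrite (qformC y x); last by case: S_spd.
set a := qform S y y; set b := qform S x y; set c := qform S x x => h.
have : 0 <= a * (a * c - b ^+ 2) by nra.
by rewrite pmulr_rge0 // subr_ge0 mulrC.
Qed.

Lemma qform_le_edot S x : qform S x x <= (\sum_j \sum_i `|S i j|) * edot x x.
Proof.
rewrite /qform mxE mulr_suml; apply: ler_sum => j _.
rewrite mxE !mulr_suml; apply: ler_sum => i _; rewrite mxE.
have xij : `|x i 0 * x j 0| <= edot x x.
  have := sqr_coord_le_edot x i; have := sqr_coord_le_edot x j.
  rewrite normrM -(real_normK (num_real (x i 0))) -(real_normK (num_real (x j 0))).
  have := normr_ge0 (x i 0); have := normr_ge0 (x j 0); nra.
apply: le_trans (ler_norm _) _.
by rewrite mulrAC normrM mulrC ler_wpM2l.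
Qed.

Lemma wnorm_sqr S x : sym_posdef S -> wnorm S x ^+ 2 = qform (invmx S) x x.
Proof. by move=> /sym_posdef_inv Si_spd; rewrite sqr_sqrtr // qform_ge0. Qed.

Lemma wnorm_gt0 S x : sym_posdef S -> x != 0 -> 0 < wnorm S x.
Proof. by move=> /sym_posdef_inv [_ Si_pos] x0; rewrite sqrtr_gt0 Si_pos. Qed.

Lemma wnormZ S (c : R) x : wnorm S (c *: x) = `|c| * wnorm S x.
Proof.
rewrite /wnorm -!/(qform _ _ _) qformZl qformZr mulrA -expr2.
by rewrite sqrtrM ?sqr_ge0 // sqrtr_sqr.
Qed.

(* Cauchy-Schwarz for S^-1 applied to x and S x, then the crude bound
   x^T S x <= c |x|^2; this makes the supremum C_Sigma S finite. *)
Lemma enorm_le_wnorm S x : sym_posdef S ->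
  enorm x <= Num.sqrt (\sum_j \sum_i `|S i j|) * wnorm S x.
Proof.
move=> S_spd; set c := \sum_j _.
have c0 : 0 <= c by rewrite sumr_ge0 // => j _; rewrite sumr_ge0.
have S_unit := sym_posdef_unit S_spd; have Si_spd := sym_posdef_inv S_spd.
suff : edot x x <= c * qform (invmx S) x x.
  by rewrite -sqrtrM // -ler_sqrt // mulr_ge0 // qform_ge0.
have [->|x0] := eqVneq x 0; first by rewrite /qform /edot !mulmx0 !mxE mulr0.
have dot_pos : 0 < edot x x by rewrite lt_def edot_eq0 x0 edot_ge0.
have xSx : qform (invmx S) x (S *m x) = edot x x.
  by rewrite /qform /edot -mulmxA (mulmxA (invmx S)) mulVmx // mul1mx.
have SxSx : qform (invmx S) (S *m x) (S *m x) = qform S x x.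
  rewrite /qform trmx_mul (proj1 S_spd) -!mulmxA (mulmxA (invmx S)) mulVmx //.
  by rewrite mul1mx mulmxA.
have := qform_cauchy_schwarz x (S *m x) Si_spd.
rewrite xSx SxSx expr2 => cs.
rewrite -(ler_pM2r dot_pos); apply: le_trans cs _.
by rewrite -mulrA mulrCA ler_wpM2l ?qform_le_edot ?qform_ge0.
Qed.

Lemma enorm_sqr_le_C_Sigma S x : sym_posdef S ->
  enorm x ^+ 2 <= C_Sigma S ^+ 2 * wnorm S x ^+ 2.
Proof.
move=> S_spd; rewrite -exprMn.
suff le_Cw : enorm x <= C_Sigma S * wnorm S x.
  by rewrite lerXn2r ?nnegrE ?sqrtr_ge0 // (le_trans _ le_Cw) ?sqrtr_ge0.
have [->|x0] := eqVneq x 0.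
  by rewrite /wnorm /enorm /edot !mulmx0 !mxE sqrtr0 mulr0.
have w_pos := wnorm_gt0 S_spd x0.
rewrite -ler_pdivrMr //; apply: ub_le_sup; last by exists x.
exists (Num.sqrt (\sum_j \sum_i `|S i j|)) => _ [y y0 <-].
by rewrite ler_pdivrMr ?enorm_le_wnorm ?wnorm_gt0.
Qed.

End QuadraticForm.

Section PosteriorPrecision.
Variables (R : realType) (K M : nat).
Variables (G : 'M[R]_(K, M)) (SL : 'M[R]_K) (S0 : 'M[R]_M) (sigma : R).
Hypotheses (SL_spd : sym_posdef SL) (S0_spd : sym_posdef S0).

Definition precision : 'M[R]_M :=
  (sigma ^+ 2)^-1 *: (G^T *m invmx SL *m G) + invmx S0.

Lemma qform_precision x : qform precision x x =
  (sigma ^+ 2)^-1 * wnorm SL (G *m x) ^+ 2 + wnorm S0 x ^+ 2.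
Proof.
rewrite !wnorm_sqr // /qform mulmxDr mulmxDl -scalemxAr -scalemxAl mxE mxE.
by rewrite trmx_mul !mulmxA.
Qed.

Lemma precision_sym_posdef : sym_posdef precision.
Proof.
split=> [|x x0].
  rewrite /precision linearD linearZ /= !trmx_mul trmxK !trmx_inv.
  by rewrite (proj1 SL_spd) (proj1 S0_spd) mulmxA.
by rewrite -[_ 0 0]/(qform precision x x) qform_precision ltr_wpDl ?mulr_ge0 ?invr_ge0
  ?sqr_ge0 ?sqrtr_ge0 ?exprn_gt0 ?wnorm_gt0.
Qed.

Lemma Sigma_post_eigen_qform lam v : Sigma_post G SL S0 sigma *m v = lam *: v ->
  lam * qform precision v v = edot v v.
Proof.
move=> v_eig; have P_unit := sym_posdef_unit precision_sym_posdef.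
have v_eq : lam *: (precision *m v) = v by rewrite scalemxAr -v_eig mulKVmx.
transitivity ((v^T *m (lam *: (precision *m v))) 0 0); last by rewrite v_eq.
by rewrite -scalemxAr mxE mulmxA.
Qed.

End PosteriorPrecision.

Lemma inf_ge0_le (R : realType) (E : set R) z :
  (forall y, E y -> 0 <= y) -> E z -> 0 <= inf E /\ inf E <= z.
Proof.
move=> E_ge0 Ez; split; first by apply: lb_le_inf => //; exists z.
by apply: ge_inf => //; exists 0.
Qed.

Section SolutionMap.
Variables (R : realType) (M : nat) (U : normedModType R).
Variables (a : U -> U -> R) (b : 'cV[R]_M -> U -> R) (u : 'cV[R]_M -> U).
Hypotheses (a_bil : bilinear_form a) (a_coer : coercive a) (b_bil : bilinear_form b).
Hypothesis u_sol : forall m psi, a (u m) psi = b m psi.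

Lemma coercive_form_inj x y : (forall z, a x z = a y z) -> x = y.
Proof.
case: a_bil a_coer => aD [aZ _] [alpha [alpha_gt0 a_ge]] axy; apply/eqP.
have axy0 : a (x - y) (x - y) = 0 by rewrite aD -scaleN1r aZ axy mulN1r subrr.
have := a_ge (x - y); rewrite axy0 pmulr_rle0 // => nxy.
by rewrite -subr_eq0 -normr_eq0 -sqrf_eq0 eq_le nxy sqr_ge0.
Qed.

Lemma solution_additive x y : u (x + y) = u x + u y.
Proof.
case: a_bil b_bil => aD _ [bD _]; apply: coercive_form_inj => z.
by rewrite aD !u_sol bD.
Qed.

Lemma solution_scalable (c : R) x : u (c *: x) = c *: u x.
Proof.
case: a_bil b_bil => _ [aZ _] [_ [bZ _]]; apply: coercive_form_inj => z.
by rewrite aZ !u_sol bZ.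
Qed.

End SolutionMap.

Section ForwardMap.
Variables (R : realType) (M K : nat) (U : normedModType R).
Variables (u : 'cV[R]_M -> U) (L : U -> 'cV[R]_K).
Hypotheses (uD : forall x y, u (x + y) = u x + u y)
           (uZ : forall (c : R) x, u (c *: x) = c *: u x).
Hypotheses (LD : forall x y, L (x + y) = L x + L y)
           (LZ : forall (c : R) x, L (c *: x) = c *: L x).
Variable ip : U -> U -> R.
Hypothesis ip_norm : inner_product_of_norm ip.

Lemma Gmat_mul x : Gmat L u *m x = L (u x).
Proof.
have LuD y z : L (u (y + z)) = L (u y) + L (u z) by rewrite uD LD.
have LuZ (c : R) y : L (u (c *: y)) = c *: L (u y) by rewrite uZ LZ.
apply/matrixP => k j; rewrite (ord1 j) (additive_scalable_sum LuD LuZ x) !mxE summxE.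
by apply: eq_bigr => i _; rewrite !mxE mulrC.
Qed.

(* The Gram vector g := (ip (u e_i) (u w))_i represents m |-> ip (u m) (u w);
   it lies in the complement of the kernel, and edot w g = |u w|^2. *)
Lemma Xker_orth_compl2 : orth_compl (orth_compl (Xker u)) `<=` Xker u.
Proof.
case: ip_norm => _ [ipD [ipZ ip_sqr]] w w_orth.
have ip0 z : ip 0 z = 0 by rewrite -(scale0r 0) ipZ mul0r.
set g := \col_i ip (u (delta_mx i 0)) (u w).
have dot_g x : edot x g = ip (u x) (u w).
  rewrite edotE (additive_scalable_sum uD uZ x).
  rewrite (big_morph (ip^~ (u w)) (fun y z => ipD y z (u w)) (ip0 (u w))).
  by apply: eq_bigr => i _; rewrite ipZ mxE.
have g_orth : orth_compl (Xker u) g by move=> x ux0; rewrite edotC dot_g ux0 ip0.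
have := w_orth _ g_orth; rewrite dot_g ip_sqr => /eqP.
by rewrite sqrf_eq0 normr_eq0 => /eqP.
Qed.

Variable Pi : 'cV[R]_M -> 'cV[R]_M.
Hypothesis Pi_proj : is_orth_proj (orth_compl (Xker u)) Pi.

Lemma u_orth_proj m : u (Pi m) = u m.
Proof.
have [_ Pi_orth] := Pi_proj m.
have : Xker u (m - Pi m) by apply: Xker_orth_compl2.
by rewrite /Xker /= -scaleN1r uD uZ scaleN1r => /eqP; rewrite subr_eq0 eq_sym => /eqP.
Qed.

Variables (S0 : 'M[R]_M) (SL : 'M[R]_K) (sigma : R).
Hypotheses (S0_spd : sym_posdef S0) (SL_spd : sym_posdef SL).

Lemma eta_inf_le m : orth_compl (Xker u) m -> m != 0 ->
  0 <= eta_inf S0 u /\ eta_inf S0 u * wnorm S0 m <= `|u m|.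
Proof.
move=> m_orth m0; have w_gt0 := wnorm_gt0 S0_spd m0.
have [eta_ge0 eta_le] : 0 <= eta_inf S0 u /\ eta_inf S0 u <= `|u m| / wnorm S0 m.
  apply: inf_ge0_le => [_ [y _ <-]|]; last by exists m.
  by rewrite divr_ge0 ?sqrtr_ge0.
by split; rewrite // -ler_pdivlMr.
Qed.

Lemma beta_obs_le m : u m != 0 ->
  0 <= beta_obs L SL u /\ beta_obs L SL u * `|u m| <= wnorm SL (L (u m)).
Proof.
move=> um0; have um_gt0 : 0 < `|u m| by rewrite normr_gt0.
have [beta_ge0 beta_le] : 0 <= beta_obs L SL u /\
    beta_obs L SL u <= wnorm SL (L (u (`|u m|^-1 *: m))).
  apply: inf_ge0_le => [_ [y _ <-]|]; first exact: sqrtr_ge0.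
  by exists (`|u m|^-1 *: m); rewrite //= uZ normrZ normfV normr_id mulVf ?gt_eqF.
split=> //; move: beta_le; rewrite uZ LZ wnormZ normfV normr_id mulrC.
by rewrite ler_pdivlMr.
Qed.

Lemma beta_eta_enorm_le m :
  (beta_obs L SL u * eta_inf S0 u * enorm (Pi m)) ^+ 2 <=
  C_Sigma S0 ^+ 2 * wnorm SL (L (u m)) ^+ 2.
Proof.
have [->|Pim0] := eqVneq (Pi m) 0.
  by rewrite /enorm /edot mulmx0 mxE sqrtr0 mulr0 expr0n mulr_ge0 ?sqr_ge0.
have Pim_orth := proj1 (Pi_proj m).
have um0 : u m != 0.
  rewrite -u_orth_proj; apply: contra Pim0 => /eqP uPim0.
  by rewrite -edot_eq0 Pim_orth.
have [eta_ge0 eta_le] := eta_inf_le Pim_orth Pim0.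
have [beta_ge0 beta_le] := beta_obs_le um0.
rewrite u_orth_proj in eta_le.
have eta_sqr : eta_inf S0 u ^+ 2 * wnorm S0 (Pi m) ^+ 2 <= `|u m| ^+ 2.
  by rewrite -exprMn lerXn2r ?nnegrE ?mulr_ge0 ?sqrtr_ge0.
have beta_sqr : beta_obs L SL u ^+ 2 * `|u m| ^+ 2 <= wnorm SL (L (u m)) ^+ 2.
  by rewrite -exprMn lerXn2r ?nnegrE ?mulr_ge0 ?sqrtr_ge0.
have := enorm_sqr_le_C_Sigma (Pi m) S0_spd.
move/(ler_wpM2l (mulr_ge0 (sqr_ge0 (beta_obs L SL u)) (sqr_ge0 (eta_inf S0 u)))).
have := ler_wpM2l (sqr_ge0 (C_Sigma S0)) (ler_wpM2l (sqr_ge0 (beta_obs L SL u)) eta_sqr).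
have := ler_wpM2l (sqr_ge0 (C_Sigma S0)) beta_sqr.
rewrite !exprMn; lra.
Qed.

Lemma posterior_eigenvalue_le lam v :
    edot v v = 1 -> Sigma_post (Gmat L u) SL S0 sigma *m v = lam *: v ->
  lam <= C_Sigma S0 ^+ 2 / ((sigma ^+ 2)^-1 * beta_obs L SL u ^+ 2 *
                             eta_inf S0 u ^+ 2 * enorm (Pi v) ^+ 2 + 1).
Proof.
move=> v_unit v_eig; set P := precision (Gmat L u) SL S0 sigma.
have q_gt0 : 0 < qform P v v.
  by apply: (proj2 (precision_sym_posdef _ _ SL_spd S0_spd)); rewrite -edot_eq0 v_unit oner_eq0.
have lam_q := Sigma_post_eigen_qform SL_spd S0_spd v_eig.
rewrite v_unit -/P in lam_q.
have -> : lam = (qform P v v)^-1 by rewrite -[lam](mulfK (lt0r_neq0 q_gt0)) lam_q mul1r.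
have X_ge0 : 0 <= (sigma ^+ 2)^-1 * beta_obs L SL u ^+ 2 * eta_inf S0 u ^+ 2 * enorm (Pi v) ^+ 2.
  by do 3 (apply: mulr_ge0; last exact: sqr_ge0); rewrite invr_ge0 sqr_ge0.
have X1_gt0 := ltr_wpDl X_ge0 (@ltr01 R).
rewrite ler_pdivlMr // mulrC ler_pdivrMr // qform_precision // Gmat_mul.
rewrite mulrDr; apply: lerD.
  have s_ge0 : 0 <= (sigma ^+ 2)^-1 by rewrite invr_ge0 sqr_ge0.
  have := ler_wpM2l s_ge0 (beta_eta_enorm_le v); rewrite !exprMn; lra.
by rewrite -v_unit -enorm_sqr enorm_sqr_le_C_Sigma.
Qed.

End ForwardMap.

Theorem mainTheorem1 (R : realType) (M K p : nat) (HM : (1 <= M)%N) (HK : (1 <= K)%N)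
  (U : completeNormedModType R) (ipU : U -> U -> R) (HipU : inner_product_of_norm ipU)
  (P : set 'rV[R]_p) (HP : compact P)
  (a : 'rV[R]_p -> U -> U -> R) (b : 'rV[R]_p -> 'cV[R]_M -> U -> R)
  (Ha : forall th, P th -> bounded_bilinear_U (a th) /\ coercive (a th))
  (Hb : forall th, P th -> bounded_bilinear_MU (b th) /\ nontrivial_form (b th))
  (u : 'rV[R]_p -> 'cV[R]_M -> U)
  (Hu : forall th, P th -> forall m psi, a th (u th m) psi = b th m psi)
  (S0 : 'M[R]_M) (HS0 : sym_posdef S0)
  (L : U -> 'cV[R]_K) (HL : bounded_linear_obs L)
  (SL : 'M[R]_K) (HSL : sym_posdef SL)
  (sigma : R) (Hsigma : 0 < sigma)
  (th : 'rV[R]_p) (Hth : P th)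
  (Pi : 'cV[R]_M -> 'cV[R]_M) (HPi : is_orth_proj (orth_compl (Xker (u th))) Pi)
  (lam : 'I_M -> R) (v : 'I_M -> 'cV[R]_M)
  (Hsorted : forall i j : 'I_M, (i <= j)%N -> lam i <= lam j)
  (Horth : forall i j : 'I_M, edot (v i) (v j) = (i == j)%:R)
  (Heig : forall i : 'I_M,
     Sigma_post (Gmat L (u th)) SL S0 sigma *m v i = lam i *: v i) :
  let Sp := Sigma_post (Gmat L (u th)) SL S0 sigma in
  let C := C_Sigma S0 in
  let beta := beta_obs L SL (u th) in
  let eta := eta_inf S0 (u th) in
  (forall i : 'I_M,
     lam i <= C ^+ 2 /
       ((sigma ^+ 2)^-1 * beta ^+ 2 * eta ^+ 2 * enorm (Pi (v i)) ^+ 2 + 1)) /\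
  \tr Sp <= C ^+ 2 *
    \sum_(i < M) ((sigma ^+ 2)^-1 * beta ^+ 2 * eta ^+ 2 * enorm (Pi (v i)) ^+ 2 + 1)^-1.
Proof.
move=> Sp C beta eta.
have [[a_bil _] a_coer] := Ha th Hth; have [[b_bil _] _] := Hb th Hth.
have uD := solution_additive a_bil a_coer b_bil (Hu th Hth).
have uZ := solution_scalable a_bil a_coer b_bil (Hu th Hth).
have [LD [LZ _]] := HL.
have v_unit i : edot (v i) (v i) = 1 by rewrite Horth eqxx.
have lam_le i := posterior_eigenvalue_le uD uZ LD LZ HipU HPi HS0 HSL (v_unit i) (Heig i).
split=> //; rewrite (mxtrace_orthonormal_eigenbasis Horth Heig) mulr_sumr.
by apply: ler_sum => i _; exact: lam_le.
Qed.
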